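(* Suppose that $t$ is a canonical closed term of $\Psi$ and that $t\rightarrow u$ in $\Psi$. Then there is a natural number $n$ such that: (1) $\langle\!\langle t\rangle\!\rangle_\Psi\rightarrow_h\langle\!\langle u\rangle\!\rangle_\Psi$; (2) there is a canonical term $v$ with $u\rightarrow^n v$; (3) $\#_{\mathbf{app}}(w)=\#_{\mathbf{app}}(u)+m$ whenever $u\rightarrow^m w$ and $m\le n$; (4) $\langle\!\langle w\rangle\!\rangle_\Psi=\langle\!\langle u\rangle\!\rangle_\Psi$ whenever $u\rightarrow^m w$ and $m\le n$.
   Context: $\lambda$-terms: $M::=x\mid\lambda x.M\mid MN$, variables from a set $\Upsilon$ with a fixed total order, $FV(M)$ the ordered sequence of free variables. Weak call-by-name reduction: $(\lambda x.M)N\rightarrow_h M\{N/x\}$, closed under $M\rightarrow_h N\Rightarrow ML\rightarrow_h NL$. $\Psi$: binary function symbol $\mathbf{app}$, binary constructor $\mathbf{capp}$, constructors $c_{x,M}$ ($M$ a $\lambda$-term, $x\in\Upsilon$) of arity the length of $FV(\lambda x.M)$. Translations: $[\![x]\!]'=x$, $[\![\lambda x.M]\!]'=c_{x,M}(x_1,\dots,x_n)$ ($FV(\lambda x.M)=x_1,\dots,x_n$), $[\![MN]\!]'=\mathbf{capp}([\![M]\!]',[\![N]\!]')$; $[\![x]\!]_\Psi=x$, $[\![\lambda x.M]\!]_\Psi=c_{x,M}(x_1,\dots,x_n)$, $[\![MN]\!]_\Psi=\mathbf{app}([\![M]\!]_\Psi,[\![N]\!]')$. Rules (any $\lambda$-term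 $M$, any abstraction or application $N$, distinct variables $z,w$): $\mathbf{app}(c_{z,z},\mathbf{capp}(w,f))\rightarrow\mathbf{app}(w,f)$; $\mathbf{app}(c_{z,z},c_{x,M}(x_1,\dots,x_n))\rightarrow c_{x,M}(x_1,\dots,x_n)$; $\mathbf{app}(c_{z,w}(\mathbf{capp}(f,g)),h)\rightarrow\mathbf{app}(f,g)$; $\mathbf{app}(c_{z,w}(c_{x,M}(x_1,\dots,x_n)),h)\rightarrow c_{x,M}(x_1,\dots,x_n)$; $\mathbf{app}(c_{y,N}(y_1,\dots,y_m),y)\rightarrow[\![N]\!]_\Psi$ ($FV(\lambda y.N)=y_1,\dots,y_m$); $\mathbf{app}(\mathbf{capp}(x,y),z)\rightarrow\mathbf{app}(\mathbf{app}(x,y),z)$. Rewriting is call-by-value: a step replaces anywhere a subterm $l\sigma$ by $r\sigma$, $\sigma$ mapping variables to constructor terms (closed terms built only from constructors, i.e. from $\mathbf{capp}$ and the $c_{x,M}$). Back translation: $\langle\!\langle x\rangle\!\rangle_\Psi=x$, $\langle\!\langle\mathbf{app}(u,v)\rangle\!\rangle_\Psi=\langle\!\langle\mathbf{capp}(u,v)\rangle\!\rangle_\Psi=\langle\!\langle u\rangle\!\rangle_\Psi\langle\!\langle v\rangle\!\rangle_\Psi$, $\langle\!\langle c_{x,M}(t_1,\dots,t_n)\rangle\!\rangle_\Psi=(\lambda x.M)\{\langle\!\langle t_1\rangle\!\rangle_\Psi/x_1,\dots,\langle\!\langle t_n\rangle\!\rangle_\Psi/x_n\}$. A closed term $t$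 is canonical if either $t=c_{x,M}(t_1,\dots,t_n)$ is a constructor term, or $t=\mathbf{app}(u,v)$ with $u$ canonical and $v$ a constructor term. $\#_{\mathbf{app}}(t)$ is the number of occurrences of $\mathbf{app}$ in $t$. *)

From HB Require Import structures.
From mathcomp Require Import all_boot all_order.
Set Implicit Arguments. Unset Strict Implicit. Unset Printing Implicit Defensive.
Import Order.TTheory.

Section Psi.
Variables (disp : Order.disp_t) (V : orderType disp).

(* lambda-terms (named, not quotiented by alpha) *)
Inductive lterm : Type :=
| Var of V
| Lam of V & lterm
| App of lterm & lterm.

Fixpoint fv_raw (M : lterm) : seq V :=
  match M with
  | Var x => [:: x]
  | Lam x M => filter (predC1 x) (fv_raw M)
  | App M N => fv_raw M ++ fv_raw N
  end.

Definition fv (M : lterm) : seq V := sort (fun a b => (a <= b)%O) (undup (fv_raw M)).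

Fixpoint lookup (s : seq (V * lterm)) (x : V) : option lterm :=
  match s with
  | [::] => None
  | p :: s' => if x == p.1 then Some p.2 else lookup s' x
  end.

(* simultaneous substitution; it is only ever applied with closed terms
   substituted, where it coincides with capture-avoiding substitution *)
Fixpoint msubst (s : seq (V * lterm)) (M : lterm) : lterm :=
  match M with
  | Var x => if lookup s x is Some N then N else Var x
  | Lam y M => Lam y (msubst (filter (fun p => p.1 != y) s) M)
  | App M N => App (msubst s M) (msubst s N)
  end.

Definition subst (M : lterm) (x : V) (N : lterm) : lterm := msubst [:: (x, N)] M.

Inductive hred : lterm -> lterm -> Prop :=
| hred_beta x M N : hred (App (Lam x M) N) (subst M x N)
| hred_app M N L : hred M N -> hred (App M L) (App N L).

(* terms of the constructor rewrite system Psi: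
   PApp = app, PCapp = capp, PC x M ts = c_{x,M}(ts) *)
Inductive pterm : Type :=
| PVar of V
| PApp of pterm & pterm
| PCapp of pterm & pterm
| PC of V & lterm & seq pterm.

Fixpoint trc (M : lterm) : pterm :=
  match M with
  | Var x => PVar x
  | Lam x M' => PC x M' (map PVar (fv (Lam x M')))
  | App M N => PCapp (trc M) (trc N)
  end.

Fixpoint trPsi (M : lterm) : pterm :=
  match M with
  | Var x => PVar x
  | Lam x M' => PC x M' (map PVar (fv (Lam x M')))
  | App M N => PApp (trPsi M) (trc N)
  end.

Fixpoint psubst (sigma : V -> pterm) (t : pterm) : pterm :=
  match t with
  | PVar x => sigma x
  | PApp a b => PApp (psubst sigma a) (psubst sigma b)
  | PCapp a b => PCapp (psubst sigma a) (psubst sigma b)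
  | PC x M ts => PC x M (map (psubst sigma) ts)
  end.

Fixpoint assoc (xs : seq V) (ts : seq pterm) (v : V) : pterm :=
  match xs, ts with
  | x :: xs', t :: ts' => if v == x then t else assoc xs' ts' v
  | _, _ => PVar v
  end.

Fixpoint In_seq (t : pterm) (ts : seq pterm) : Prop :=
  if ts is t' :: ts' then t' = t \/ In_seq t ts' else False.

Inductive is_cterm : pterm -> Prop :=
| ct_capp t u : is_cterm t -> is_cterm u -> is_cterm (PCapp t u)
| ct_c x M ts : size ts = size (fv (Lam x M)) ->
    (forall t, In_seq t ts -> is_cterm t) -> is_cterm (PC x M ts).

Inductive canonical : pterm -> Prop :=
| can_c x M ts : is_cterm (PC x M ts) -> canonical (PC x M ts)
| can_app u v : canonical u -> is_cterm v -> canonical (PApp u v).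

Definition not_var (N : lterm) : Prop := if N is Var _ then False else True.

(* instances l sigma -> r sigma of the rules of Psi, sigma mapping
   variables to constructor terms *)
Inductive rstep : pterm -> pterm -> Prop :=
| rule1 z w f : is_cterm w -> is_cterm f ->
    rstep (PApp (PC z (Var z) [::]) (PCapp w f)) (PApp w f)
| rule2 z x M ts : is_cterm (PC x M ts) ->
    rstep (PApp (PC z (Var z) [::]) (PC x M ts)) (PC x M ts)
| rule3 z w f g h : z != w -> is_cterm f -> is_cterm g -> is_cterm h ->
    rstep (PApp (PC z (Var w) [:: PCapp f g]) h) (PApp f g)
| rule4 z w x M ts h : z != w -> is_cterm (PC x M ts) -> is_cterm h ->
    rstep (PApp (PC z (Var w) [:: PC x M ts]) h) (PC x M ts)
| rule5 y N ts s : not_var N -> is_cterm (PC y N ts) -> is_cterm s ->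
    rstep (PApp (PC y N ts) s)
          (psubst (fun v => if v == y then s else assoc (fv (Lam y N)) ts v)
                  (trPsi N))
| rule6 a b c : is_cterm a -> is_cterm b -> is_cterm c ->
    rstep (PApp (PCapp a b) c) (PApp (PApp a b) c).

Inductive step : pterm -> pterm -> Prop :=
| step_root t u : rstep t u -> step t u
| step_appl t t' u : step t t' -> step (PApp t u) (PApp t' u)
| step_appr t u u' : step u u' -> step (PApp t u) (PApp t u')
| step_cappl t t' u : step t t' -> step (PCapp t u) (PCapp t' u)
| step_cappr t u u' : step u u' -> step (PCapp t u) (PCapp t u')
| step_c x M ts1 t t' ts2 : step t t' ->
    step (PC x M (ts1 ++ t :: ts2)) (PC x M (ts1 ++ t' :: ts2)).

Inductive nsteps : nat -> pterm -> pterm -> Prop :=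
| nsteps0 t : nsteps 0 t t
| nstepsS n t u v : step t u -> nsteps n u v -> nsteps n.+1 t v.

Fixpoint napp (t : pterm) : nat :=
  match t with
  | PVar _ => 0
  | PApp a b => (napp a + napp b).+1
  | PCapp a b => napp a + napp b
  | PC _ _ ts => sumn (map napp ts)
  end.

Fixpoint back (t : pterm) : lterm :=
  match t with
  | PVar x => Var x
  | PApp a b => App (back a) (back b)
  | PCapp a b => App (back a) (back b)
  | PC x M ts => msubst (zip (fv (Lam x M)) (map back ts)) (Lam x M)
  end.

End Psi.

(* A step from a canonical term app(...app(c, s1)..., sn) is a rule instance at some
   app-node of the left spine.  Except for rule 6 (excluded, since the head is a
   constructor c_{x,M}) each rule mirrors one beta step of the back translation, and
   the reduct is again a spine: a constructor term h applied to constructor terms.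
   If h is a left-nested tower capp(...capp(c, ...)...) of depth k, the only possible
   steps are the k forced applications of rule 6 unfolding the tower, each of which
   creates one app and leaves the back translation unchanged; after them the term is
   canonical. *)

From mathcomp Require Import all_boot all_order.

Section CanonicalReduction.
Context {disp : Order.disp_t} {V : orderType disp}.
Implicit Types (E : seq (V * lterm V)) (L M N : lterm V) (t u q : pterm V).

Lemma mem_fv L x : (x \in fv L) = (x \in fv_raw L).
Proof. by rewrite /fv mem_sort mem_undup. Qed.

Lemma lookup_filter E y x :
  lookup (filter (fun p => p.1 != y) E) x = if x == y then None else lookup E x.
Proof.
elim: E => [|[a b] E IH] /=; first by case: (x == y).
case: (eqVneq a y) => [->|nay] /=; first by rewrite IH; case: eqVneq => // ->.
rewrite IH; case: (eqVneq x y) => [->|//].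
by rewrite eq_sym (negPf nay).
Qed.

Lemma lookup_cat E1 E2 x :
  lookup (E1 ++ E2) x = if lookup E1 x is Some N then Some N else lookup E2 x.
Proof. by elim: E1 => [|[a b] E IH] //=; case: (x == a). Qed.

Lemma eq_msubst L E1 E2 :
  {in fv_raw L, lookup E1 =1 lookup E2} -> msubst E1 L = msubst E2 L.
Proof.
elim: L E1 E2 => [x|y M IH|M IHM N IHN] E1 E2 eq_s /=.
- by rewrite eq_s // inE.
- congr Lam; apply: IH => z zM; rewrite !lookup_filter.
  by case: (eqVneq z y) => // nzy; apply: eq_s; rewrite /= mem_filter /= nzy.
- by rewrite (IHM E1 E2) ?(IHN E1 E2) // => z zL; apply: eq_s; rewrite /= mem_cat zL ?orbT.
Qed.

Lemma msubst_nil L : msubst [::] L = L.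
Proof. by elim: L => [x|y M IH|M IHM N IHN] //=; rewrite ?IH ?IHM ?IHN. Qed.

Lemma msubst_closed E L : fv_raw L = [::] -> msubst E L = L.
Proof. by move=> L0; rewrite (@eq_msubst L E [::]) ?msubst_nil // => z; rewrite L0. Qed.

Definition closed_env E := forall x N, lookup E x = Some N -> fv_raw N = [::].

Lemma closed_env_filter {E} y : closed_env E -> closed_env (filter (fun p => p.1 != y) E).
Proof. by move=> cE x N; rewrite lookup_filter; case: (x == y) => //; apply: cE. Qed.

Lemma msubst_comp L E1 E2 : closed_env E2 ->
  msubst E1 (msubst E2 L) = msubst (E2 ++ E1) L.
Proof.
elim: L E1 E2 => [x|y M IH|M IHM N IHN] E1 E2 cE2 /=.
- by rewrite lookup_cat; case Ex: (lookup E2 x) => [N|] //; rewrite msubst_closed // (cE2 x).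
- by rewrite IH ?filter_cat //; apply: closed_env_filter.
- by rewrite IHM ?IHN.
Qed.

Lemma mem_fv_msubst {L E x} : closed_env E -> x \in fv_raw (msubst E L) ->
  x \in fv_raw L /\ lookup E x = None.
Proof.
elim: L E => [y|y M IH|M IHM N IHN] E cE /=.
- case Ey: (lookup E y) => [N|]; first by rewrite (cE y N Ey).
  by rewrite mem_seq1 => /eqP ->; rewrite eqxx.
- rewrite mem_filter => /andP [/= nxy /(IH _ (closed_env_filter y cE))] [xM].
  by rewrite lookup_filter (negPf nxy) mem_filter /= nxy xM.
- by rewrite !mem_cat => /orP [/(IHM _ cE) [-> ->] | /(IHN _ cE) [-> ->]]; rewrite ?orbT.
Qed.

Lemma mem_cat_l {x : V} {xs ys} : x \in xs -> x \in xs ++ ys.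
Proof. by rewrite mem_cat => ->. Qed.

Lemma mem_cat_r {x : V} {xs ys} : x \in ys -> x \in xs ++ ys.
Proof. by rewrite mem_cat orbC => ->. Qed.

Lemma In_seq_cat t (ts1 ts2 : seq (pterm V)) : In_seq t (ts1 ++ t :: ts2).
Proof. by elim: ts1 => [|a ts IH] /=; [left|right]. Qed.

Lemma In_seq_map (f : V -> pterm V) t (xs : seq V) :
  In_seq t (map f xs) -> exists2 x, x \in xs & t = f x.
Proof.
elim: xs => [|a xs IH] //= [<-|/IH [x xs_x ->]]; first by exists a; rewrite ?inE ?eqxx.
by exists x; rewrite // inE xs_x orbT.
Qed.

Lemma lookup_zip_back xs (ts : seq (pterm V)) x N :
  lookup (zip xs (map (@back _ _) ts)) x = Some N -> exists2 t, In_seq t ts & N = back t.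
Proof.
elim: xs ts => [|a xs IH] [|t ts] //=.
case: (x == a) => [[<-]|/IH [t' t'ts ->]]; first by exists t; first left.
by exists t'; first right.
Qed.

Lemma lookup_zip_assoc xs (ts : seq (pterm V)) x :
  x \in xs -> size xs = size ts ->
  lookup (zip xs (map (@back _ _) ts)) x = Some (back (assoc xs ts x)).
Proof.
elim: xs ts => [|a xs IH] [|t ts] //= xs_x [sz].
case: (eqVneq x a) => [//|nxa].
by apply: IH => //; move: xs_x; rewrite inE (negPf nxa).
Qed.

Lemma assoc_In_seq xs (ts : seq (pterm V)) x :
  x \in xs -> size xs = size ts -> In_seq (assoc xs ts x) ts.
Proof.
elim: xs ts => [|a xs IH] [|t ts] //= xs_x [sz].
case: (eqVneq x a) => [_|nxa]; first by left.
by right; apply: IH => //; move: xs_x; rewrite inE (negPf nxa).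
Qed.

Lemma lookup_zip_map (f : V -> lterm V) xs x :
  x \in xs -> lookup (zip xs (map f xs)) x = Some (f x).
Proof. by elim: xs => [|a xs IH] //=; rewrite inE; case: (eqVneq x a) => [->|] //= _ /IH. Qed.

Lemma cterm_PC_inv {x M ts} : is_cterm (PC x M ts) ->
  size ts = size (fv (Lam x M)) /\ forall t, In_seq t ts -> is_cterm t.
Proof. by move=> ct; inversion ct. Qed.

Lemma cterm_back_closed t : is_cterm t -> fv_raw (back t) = [::].
Proof.
elim=> [a b _ a0 _ b0|x M ts sz _ IH]; first by rewrite /= a0 b0.
rewrite [back _]/=; set E := zip _ _.
have cE : closed_env E by move=> z N /lookup_zip_back [t' /IH t'0 ->].
case F: (fv_raw _) => [|z l] //.
have /(mem_fv_msubst cE) [zM] : z \in fv_raw (msubst E (Lam x M)) by rewrite F inE eqxx.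
by rewrite lookup_zip_assoc ?mem_fv ?sz.
Qed.

Lemma cterm_irreducible {t u} : is_cterm t -> ~ step t u.
Proof.
move=> ct tu; elim: tu ct => {t u}.
- by move=> t u tu ct; inversion tu; subst; inversion ct.
- by move=> t t' u _ _ ct; inversion ct.
- by move=> t t' u _ _ ct; inversion ct.
- by move=> t t' u _ IH ct; inversion ct; apply: IH.
- by move=> t t' u _ IH ct; inversion ct; apply: IH.
- move=> x M ts1 t t' ts2 _ IH ct; inversion ct as [|? ? ? _ ct_ts]; subst.
  exact/IH/ct_ts/In_seq_cat.
Qed.

Inductive spine : pterm V -> Prop :=
| spine_head h : is_cterm h -> spine h
| spine_app q c : spine q -> is_cterm c -> spine (PApp q c).

Definition is_capp t := if t is PCapp _ _ then true else false.

Fixpoint head t := if t is PApp a _ then head a else t.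

Fixpoint capp_depth t := if t is PCapp a _ then (capp_depth a).+1 else 0.

(* rule 6 applied at the innermost application of the spine *)
Fixpoint unfold_capp t :=
  match t with
  | PApp (PCapp a b) c => PApp (PApp a b) c
  | PApp a c => PApp (unfold_capp a) c
  | _ => t
  end.

Lemma map_psubst_PVar (sigma : V -> pterm V) (xs : seq V) :
  map (psubst sigma) (map (@PVar _ _) xs) = map sigma xs.
Proof. by elim: xs => [|a xs IH] //=; rewrite IH. Qed.

Lemma psubst_tr_spine L (sigma : V -> pterm V) :
  {in fv_raw L, forall x, is_cterm (sigma x)} ->
  [/\ is_cterm (psubst sigma (trc L)), spine (psubst sigma (trPsi L)) &
      not_var L -> ~~ is_capp (psubst sigma (trPsi L))].
Proof.
elim: L => [x|x M _|M IHM N IHN] ct_sigma /=.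
- by have cx := ct_sigma x (mem_head _ _); split=> //; constructor.
- have ct : is_cterm (PC x M (map sigma (fv (Lam x M)))).
    constructor; first by rewrite size_map.
    by move=> t /In_seq_map [y fv_y ->]; apply: ct_sigma; rewrite -mem_fv.
  by rewrite map_psubst_PVar; split=> //; constructor.
- have [cM sM _] := IHM (fun y yM => ct_sigma y (mem_cat_l yM)).
  have [cN _ _] := IHN (fun y yN => ct_sigma y (mem_cat_r yN)).
  by split; constructor.
Qed.

Lemma back_psubst_tr L (sigma : V -> pterm V) E :
  {in fv_raw L, forall x, lookup E x = Some (back (sigma x))} ->
  back (psubst sigma (trc L)) = msubst E L /\ back (psubst sigma (trPsi L)) = msubst E L.
Proof.
elim: L => [x|x M _|M IHM N IHN] E_sigma.
- by rewrite /= E_sigma // inE.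
- suff e : back (PC x M (map sigma (fv (Lam x M)))) = msubst E (Lam x M).
    by rewrite /= map_psubst_PVar.
  change (msubst (zip (fv (Lam x M)) (map (@back _ _) (map sigma (fv (Lam x M)))))
                 (Lam x M) = msubst E (Lam x M)).
  rewrite -map_comp; apply: eq_msubst => z z_fv.
  by rewrite lookup_zip_map ?mem_fv // E_sigma.
- have [e1 e2] := IHM (fun y yM => E_sigma y (mem_cat_l yM)).
  have [e3 _] := IHN (fun y yN => E_sigma y (mem_cat_r yN)).
  by rewrite /= e1 e2 e3.
Qed.

Lemma back_PC_id z : back (PC z (Var z) [::]) = Lam z (Var (V:=V) z).
Proof. by rewrite /=; case: (fv _). Qed.

Lemma back_PC_const {z w t} : z != w -> size [:: t] = size (fv (Lam z (Var w))) ->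
  back (PC z (Var w) [:: t]) = Lam z (back t).
Proof.
move=> nzw sz.
have fv_w : w \in fv (Lam z (Var w)) by rewrite mem_fv /= eq_sym nzw inE.
have fv_zw : fv (Lam z (Var w)) = [:: w].
  by move: sz fv_w; case: (fv _) => [|a [|]] //= _; rewrite inE => /eqP ->.
by rewrite /= fv_zw /= eq_sym nzw /= eqxx.
Qed.

Lemma back_rule5 {y N ts} (s : pterm V) : is_cterm (PC y N ts) ->
  exists2 B, back (PApp (PC y N ts) s) = App (Lam y B) (back s) &
    back (psubst (fun x => if x == y then s else assoc (fv (Lam y N)) ts x) (trPsi N))
    = subst B y (back s).
Proof.
move=> ct; pose S := filter (fun p => p.1 != y) (zip (fv (Lam y N)) (map (@back _ _) ts)).
exists (msubst S N) => //.
have [sz ct_ts] := cterm_PC_inv ct.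
have cS : closed_env S.
  move=> x N'; rewrite lookup_filter; case: (x == y) => //.
  by case/lookup_zip_back=> t /ct_ts /cterm_back_closed ? ->.
rewrite /subst msubst_comp //; apply: (proj2 (back_psubst_tr _ _ _ _)) => x xN.
rewrite lookup_cat lookup_filter.
case: (eqVneq x y) => [->|nxy] /=; first by rewrite eqxx.
by rewrite lookup_zip_assoc // mem_fv /= mem_filter /= nxy.
Qed.

Lemma rstep_canonical_hred t s u : canonical t -> rstep (PApp t s) u ->
  hred (back (PApp t s)) (back u).
Proof.
move=> can_t tu.
suff [x [B [-> ->]]] : exists x B, back (PApp t s) = App (Lam x B) (back s) /\
  back u = subst B x (back s) by constructor.
inversion tu as [z w f _ _|z x M ts _|z w f g h nzw cf cg _|z w x M ts h nzw cw _
                |y N ts ? _ ct _|]; subst.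
- by exists z, (Var z); split; [rewrite -back_PC_id | rewrite /subst /= eqxx].
- by exists z, (Var z); split; [rewrite -back_PC_id | rewrite /subst /= eqxx].
- have cfg : is_cterm (PCapp f g) by constructor.
  inversion can_t as [? ? ? ct|]; have [sz _] := cterm_PC_inv ct.
  exists z, (back (PCapp f g)); split; first by rewrite -(back_PC_const nzw sz).
  by rewrite /subst msubst_closed // cterm_back_closed.
- inversion can_t as [? ? ? ct|]; have [sz _] := cterm_PC_inv ct.
  exists z, (back (PC x M ts)); split; first by rewrite -(back_PC_const nzw sz).
  by rewrite /subst msubst_closed // cterm_back_closed.
- by have [B -> ->] := back_rule5 s ct; exists y, B.
- by inversion can_t.
Qed.

Lemma rstep_spine {t u} : rstep t u -> spine u /\ ~~ is_capp u.
Proof.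
case=> {t u} [z w f cw cf|z x M ts ct|z w f g h _ cf cg _|z w x M ts h _ ct _
            |y N ts s nvN ct cs|a b c ca cb cc];
  try by split=> //; repeat (apply: spine_app => //); apply: spine_head.
have [sz ct_ts] := cterm_PC_inv ct.
pose sigma x := if x == y then s else assoc (fv (Lam y N)) ts x.
have ct_sigma : {in fv_raw N, forall x, is_cterm (sigma x)}.
  move=> x xN; rewrite /sigma; case: (eqVneq x y) => [//|nxy].
  by apply/ct_ts/assoc_In_seq; rewrite ?mem_fv /= ?mem_filter /= ?nxy.
by have [_ ? /(_ nvN)] := psubst_tr_spine N sigma ct_sigma.
Qed.

Lemma canonical_step_spine {t u} : canonical t -> step t u ->
  [/\ hred (back t) (back u), spine u & ~~ is_capp u].
Proof.
move=> can_t; elim: can_t u => [x M ts ct|t' s can_t' IH cs] u tu.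
  by case: (cterm_irreducible ct tu).
inversion tu as [? ? r|? ? ? st|? ? ? st| | |]; subst.
- by have [] := rstep_spine r; split=> //; apply: rstep_canonical_hred.
- by have [? ? _] := IH _ st; split=> //; constructor.
- by case: (cterm_irreducible cs st).
Qed.

Lemma unfold_capp_invariants {q a b} : ~~ is_capp q -> head q = PCapp a b ->
  [/\ ~~ is_capp (unfold_capp q), head (unfold_capp q) = head a,
      napp (unfold_capp q) = (napp q).+1 & back (unfold_capp q) = back q].
Proof.
elim: q => // q IH c _ _ /=.
case: q IH => [x|q1 q2|a' b'|x M ts] IH //= hq.
- by have [_ -> /= -> ->] := IH isT hq.
- by case: hq => -> -> /=; rewrite addSn.
Qed.

Lemma spine_unfold_capp {q a b} : spine q -> ~~ is_capp q -> head q = PCapp a b ->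
  [/\ step q (unfold_capp q), forall q', step q q' -> q' = unfold_capp q &
      spine (unfold_capp q)].
Proof.
elim=> [h ch|{}q c sq IH cc]; first by case: ch => //= ? ? ? _ _ _ [].
case: q sq IH => [x|q1 q2|a' b'|x M ts] sq IH //= _ hq.
- have [qq' uniq sq'] := IH isT hq.
  split; [exact: step_appl | | by constructor].
  move=> r qr; inversion qr as [? ? rr|? ? ? st|? ? ? st| | |]; subst.
  + by inversion rr.
  + by rewrite (uniq _ st).
  + by case: (cterm_irreducible cc st).
- case: hq => ? ?; subst a' b'.
  have [ca cb] : is_cterm a /\ is_cterm b.
    by inversion sq as [? ct|]; inversion ct.
  split; [exact/step_root/rule6 | | by do 2 apply: spine_app => //; apply: spine_head].
  move=> r qr; inversion qr as [? ? rr|? ? ? st|? ? ? st| | |]; subst.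
  + by inversion rr.
  + by case: (cterm_irreducible (ct_capp ca cb) st).
  + by case: (cterm_irreducible cc st).
Qed.

Lemma cterm_head t : is_cterm t -> head t = t.
Proof. by case. Qed.

Lemma spine_head_cterm {q} : spine q -> is_cterm (head q).
Proof. by elim=> [h ch|{}q c _ IH _] //=; rewrite cterm_head. Qed.

Lemma spine_canonical q : spine q -> ~~ is_capp q -> capp_depth (head q) = 0 -> canonical q.
Proof.
elim=> [h ch|{}q c sq IH cc] ncq d0; first by case: ch ncq d0 => // *; do ! constructor.
by constructor=> //; apply: IH => //; case: q sq d0 {ncq}.
Qed.

Lemma nsteps0E t u : nsteps 0 t u -> u = t.
Proof. by move=> tu; inversion tu. Qed.

Lemma spine_normalise {k q} : spine q -> ~~ is_capp q -> capp_depth (head q) = k ->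
  (exists2 v, canonical v & nsteps k q v) /\
  (forall m w, m <= k -> nsteps m q w -> napp w = napp q + m /\ back w = back q).
Proof.
elim: k q => [|k IH] q sq ncq dk.
  split; first by exists q; [apply: spine_canonical | constructor].
  by move=> m w; rewrite leqn0 => /eqP -> /nsteps0E ->; rewrite addn0.
have ch := spine_head_cterm sq.
case hq: (head q) dk ch => [||a b|] //= [dk] ch.
have ca : is_cterm a by inversion ch.
have [nc' hd' napp' back'] := unfold_capp_invariants ncq hq.
have [qq' uniq sq'] := spine_unfold_capp sq ncq hq.
have dk' : capp_depth (head (unfold_capp q)) = k by rewrite hd' cterm_head.
have [[v can_v q'v] inv] := IH _ sq' nc' dk'.
split; first by exists v => //; apply: nstepsS q'v.
case=> [|m] w; first by move=> _ /nsteps0E ->; rewrite addn0.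
move=> lt_mk qw; inversion qw as [|? ? q' ? qq'' q'w]; subst.
rewrite (uniq _ qq'') in q'w.
by have [-> ->] := inv m w lt_mk q'w; rewrite napp' back' addSnnS.
Qed.

End CanonicalReduction.

Theorem lemma15 (disp : Order.disp_t) (V : orderType disp) (t u : pterm V) :
  canonical t -> step t u ->
  exists n : nat,
    hred (back t) (back u) /\
    (exists v, canonical v /\ nsteps n u v) /\
    (forall (m : nat) (w : pterm V), m <= n -> nsteps m u w -> napp w = napp u + m) /\
    (forall (m : nat) (w : pterm V), m <= n -> nsteps m u w -> back w = back u).
Proof.
move=> can_t tu.
have [hr su ncu] := canonical_step_spine can_t tu.
have [[v can_v uv] inv] := spine_normalise su ncu erefl.
exists (capp_depth (head u)); split=> //; split; first by exists v.
by split=> m w le_mn uw; have [] := inv m w le_mn uw.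
Qed.
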